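(* Let $Q$ be a quiver and suppose $(kQ,\Delta,\varepsilon,\mathrm{M},\mu,\Phi,\mathcal S,\alpha,\beta)$ is a graded Majid algebra structure on the path coalgebra $kQ$. Then $\mathrm{M}(Q_0\otimes Q_0)\subseteq Q_0$, and $Q_0$ with the binary operation $(g,h)\mapsto gh=\mathrm{M}(g\otimes h)$ is a group $G$ with identity $1$ and inverse $g^{-1}=\mathcal S(g)$. Moreover, writing $M=kQ_1$ and ${}^gM^h$ for the span of arrows with source $h$ and target $g$, for all $f,g,h\in G$ one has $f.\,{}^gM^h={}^{fg}M^{fh}$ and ${}^gM^h.f={}^{gf}M^{hf}$ (where $f.m=\mathrm{M}(f\otimes m)$, $m.f=\mathrm{M}(m\otimes f)$), and for $e,f,g,h\in G$, $m\in{}^gM^h$: $e.(f.m)=\frac{\Phi(e,f,g)}{\Phi(e,f,h)}(ef).m$, $(m.e).f=\frac{\Phi(h,e,f)}{\Phi(g,e,f)}m.(ef)$, $(e.m).f=\frac{\Phi(e,h,f)}{\Phi(e,g,f)}e.(m.f)$. In particular the number of arrows from $x$ to $g^{-1}cgx$ equals the number of arrows from $1$ to $c$, for all $x,g,c\in G$.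
   Context: A Majid algebra (dual quasi-Hopf algebra) over $k$ is a coalgebra $(H,\Delta,\varepsilon)$ (Sweedler notation $\Delta(a)=a_1\otimes a_2$) together with coalgebra maps $\mathrm{M}:H\otimes H\to H$, $a\otimes b\mapsto ab$, and $\mu:k\to H$, $\lambda\mapsto\lambda 1_H$, a convolution-invertible linear map $\Phi:H^{\otimes 3}\to k$ (the reassociator), a coalgebra antimorphism $\mathcal S:H\to H$ and linear maps $\alpha,\beta:H\to k$ such that for all $a,b,c,d\in H$: (i) $a_1(b_1c_1)\Phi(a_2,b_2,c_2)=\Phi(a_1,b_1,c_1)(a_2b_2)c_2$; (ii) $1_Ha=a=a1_H$; (iii) $\Phi(a_1,b_1,c_1d_1)\Phi(a_2b_2,c_2,d_2)=\Phi(b_1,c_1,d_1)\Phi(a_1,b_2c_2,d_2)\Phi(a_2,b_3,c_3)$; (iv) $\Phi(a,1_H,b)=\varepsilon(a)\varepsilon(b)$; (v) $\mathcal S(a_1)\alpha(a_2)a_3=\alpha(a)1_H$ and $a_1\beta(a_2)\mathcal S(a_3)=\beta(a)1_H$; (vi) $\Phi(a_1,\mathcal S(a_3),a_5)\beta(a_2)\alpha(a_4)=\Phi^{-1}(\mathcal S(a_1),a_3,\mathcal S(a_5))\alpha(a_2)\beta(a_4)=\varepsilon(a)$. A quiver $Q=(Q_0,Q_1,s,t)$ has vertex set $Q_0$, arrow set $Q_1$, source and target maps $s,t$. Paths of length $n$ form the set $Q_n$ (vertices are paths of length 0). The path coalgebra $kQ$ has basis all paths, with $\Delta(g)=g\otimes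 g$, $\varepsilon(g)=1$ for vertices and, for $p=a_n\cdots a_1$, $\varepsilon(p)=0$, $\Delta(p)=p\otimes s(a_1)+\sum_{i=1}^{n-1}a_n\cdots a_{i+1}\otimes a_i\cdots a_1+t(a_n)\otimes p$; it is graded by length. A graded Majid algebra structure on $kQ$ is a Majid algebra structure on the coalgebra $kQ$ with $\mathrm{M}(kQ_i\otimes kQ_j)\subseteq kQ_{i+j}$, $1\in kQ_0$, $\mathcal S(kQ_n)\subseteq kQ_n$, and $\Phi,\alpha,\beta$ vanishing whenever some homogeneous argument has positive degree. *)

From HB Require Import structures.
From mathcomp Require Import all_boot all_algebra.
From Stdlib Require Import ClassicalEpsilon.
Set Implicit Arguments. Unset Strict Implicit. Unset Printing Implicit Defensive.
Import GRing.Theory.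
Local Open Scope ring_scope.

(* A raw path is (v, l) with l = [:: a_n; ...; a_1] (written order, a_1 first
   arrow) and v the source vertex; it is valid when consecutive arrows compose
   and s a_1 = v. *)
Definition qpath (V A : eqType) := (V * seq A)%type.

Definition ptgt {V A : eqType} (t : A -> V) (p : qpath V A) : V :=
  if p.2 is a :: _ then t a else p.1.

Fixpoint validl {V A : eqType} (s t : A -> V) (v : V) (l : seq A) : bool :=
  match l with
  | [::] => true
  | a :: l' => (s a == (if l' is b :: _ then t b else v)) && validl s t v l'
  end.

Definition valid {V A : eqType} (s t : A -> V) (p : qpath V A) : bool :=
  validl s t p.1 p.2.

Definition vtx {V A : eqType} (v : V) : qpath V A := (v, [::]).
Definition arr {V A : eqType} (s : A -> V) (a : A) : qpath V A := (s a, [:: a]).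
Definition plen {V A : eqType} (p : qpath V A) : nat := size p.2.

(* Delta(p) = sum over (u, w) in splits p of u (x) w   (u = p_1, w = p_2) *)
Definition splits {V A : eqType} (t : A -> V) (p : qpath V A)
  : seq (qpath V A * qpath V A) :=
  [seq ((ptgt t (p.1, drop i p.2), take i p.2), (p.1, drop i p.2))
  | i <- iota 0 (size p.2).+1].

(* Elements of kQ: finitely supported coefficient functions on valid paths. *)
Definition elt {V A : eqType} {k : fieldType} (s t : A -> V) (x : qpath V A -> k) :=
  (exists sq : seq (qpath V A), forall p, x p != 0 -> p \in sq) /\
  (forall p, x p != 0 -> valid s t p).

Definition sup {V A : eqType} {k : fieldType} (x : qpath V A -> k) : seq (qpath V A) :=
  undup (epsilon (inhabits (@nil (qpath V A)))
                 (fun sq => forall p, x p != 0 -> p \in sq)).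

Definition bas {V A : eqType} {k : fieldType} (p : qpath V A) : qpath V A -> k :=
  fun q => (q == p)%:R.

(* linear extensions of maps given on the basis *)
Definition lin0 {V A : eqType} {k : fieldType} (x : qpath V A -> k) (g : qpath V A -> k) : k :=
  \sum_(p <- sup x) x p * g p.
Definition lin {V A : eqType} {k : fieldType} {T : Type}
  (x : qpath V A -> k) (f : qpath V A -> T -> k) : T -> k :=
  fun q => \sum_(p <- sup x) x p * f p q.

Definition eps {V A : eqType} {k : fieldType} (p : qpath V A) : k := (plen p == 0)%:R.

(* comultiplication of an element, as a coefficient function on basis pairs *)
Definition cop {V A : eqType} {k : fieldType} (t : A -> V) (x : qpath V A -> k)
  : qpath V A * qpath V A -> k :=
  lin x (fun r uv => (count_mem uv (splits t r))%:R).

(* Sweedler sums over basis paths *)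
Definition sw2 {V A : eqType} {k : fieldType} (t : A -> V) (a : qpath V A)
  (F : qpath V A -> qpath V A -> k) : k :=
  \sum_(x <- splits t a) F x.1 x.2.
Definition sw3 {V A : eqType} {k : fieldType} (t : A -> V) (a : qpath V A)
  (F : qpath V A -> qpath V A -> qpath V A -> k) : k :=
  \sum_(x <- splits t a) \sum_(y <- splits t x.2) F x.1 y.1 y.2.
Definition sw5 {V A : eqType} {k : fieldType} (t : A -> V) (a : qpath V A)
  (F : qpath V A -> qpath V A -> qpath V A -> qpath V A -> qpath V A -> k) : k :=
  \sum_(x1 <- splits t a) \sum_(x2 <- splits t x1.2) \sum_(x3 <- splits t x2.2)
    \sum_(x4 <- splits t x3.2) F x1.1 x2.1 x3.1 x4.1 x4.2.

(* Graded Majid algebra structure on kQ, all maps given by their values on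
   basis paths: mul p q = M(p (x) q), one = 1_H, Phi/Phinv the reassociator and
   its convolution inverse, S the antipode, alpha, beta. *)
Record graded_majid {V A : eqType} {k : fieldType} (s t : A -> V)
  (mul : qpath V A -> qpath V A -> qpath V A -> k) (one : qpath V A -> k)
  (Phi Phinv : qpath V A -> qpath V A -> qpath V A -> k)
  (S : qpath V A -> qpath V A -> k) (alpha beta : qpath V A -> k) : Prop := {
  gm_mul_elt : forall p q, valid s t p -> valid s t q -> elt s t (mul p q);
  gm_one_elt : elt s t one;
  gm_S_elt : forall p, valid s t p -> elt s t (S p);
  (* M is a coalgebra map *)
  gm_mul_eps : forall a b, valid s t a -> valid s t b ->
    lin0 (mul a b) eps = eps a * eps b;
  gm_mul_cop : forall a b, valid s t a -> valid s t b -> forall u v,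
    cop t (mul a b) (u, v) =
    sw2 t a (fun a1 a2 => sw2 t b (fun b1 b2 => mul a1 b1 u * mul a2 b2 v));
  (* mu is a coalgebra map *)
  gm_one_eps : lin0 one eps = 1;
  gm_one_cop : forall u v, cop t one (u, v) = one u * one v;
  (* (i) *)
  gm_assoc : forall a b c, valid s t a -> valid s t b -> valid s t c -> forall q,
    sw2 t a (fun a1 a2 => sw2 t b (fun b1 b2 => sw2 t c (fun c1 c2 =>
      lin (mul b1 c1) (fun r => mul a1 r) q * Phi a2 b2 c2))) =
    sw2 t a (fun a1 a2 => sw2 t b (fun b1 b2 => sw2 t c (fun c1 c2 =>
      Phi a1 b1 c1 * lin (mul a2 b2) (fun r => mul r c2) q)));
  (* (ii) *)
  gm_unitl : forall a, valid s t a -> forall q, lin one (fun r => mul r a) q = bas a q;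
  gm_unitr : forall a, valid s t a -> forall q, lin one (fun r => mul a r) q = bas a q;
  (* (iii) *)
  gm_pentagon : forall a b c d, valid s t a -> valid s t b -> valid s t c -> valid s t d ->
    sw2 t a (fun a1 a2 => sw2 t b (fun b1 b2 => sw2 t c (fun c1 c2 => sw2 t d (fun d1 d2 =>
      lin0 (mul c1 d1) (fun r => Phi a1 b1 r) * lin0 (mul a2 b2) (fun r => Phi r c2 d2))))) =
    sw2 t a (fun a1 a2 => sw3 t b (fun b1 b2 b3 => sw3 t c (fun c1 c2 c3 => sw2 t d (fun d1 d2 =>
      Phi b1 c1 d1 * lin0 (mul b2 c2) (fun r => Phi a1 r d2) * Phi a2 b3 c3))));
  (* (iv) *)
  gm_Phi_unit : forall a b, valid s t a -> valid s t b ->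
    lin0 one (fun r => Phi a r b) = eps a * eps b;
  (* Phi is convolution invertible with inverse Phinv *)
  gm_Phi_inv_r : forall a b c, valid s t a -> valid s t b -> valid s t c ->
    sw2 t a (fun a1 a2 => sw2 t b (fun b1 b2 => sw2 t c (fun c1 c2 =>
      Phi a1 b1 c1 * Phinv a2 b2 c2))) = eps a * eps b * eps c;
  gm_Phi_inv_l : forall a b c, valid s t a -> valid s t b -> valid s t c ->
    sw2 t a (fun a1 a2 => sw2 t b (fun b1 b2 => sw2 t c (fun c1 c2 =>
      Phinv a1 b1 c1 * Phi a2 b2 c2))) = eps a * eps b * eps c;
  (* S is a coalgebra antimorphism *)
  gm_S_cop : forall a, valid s t a -> forall u v,
    cop t (S a) (u, v) = sw2 t a (fun a1 a2 => S a2 u * S a1 v);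
  gm_S_eps : forall a, valid s t a -> lin0 (S a) eps = eps a;
  (* (v) *)
  gm_alpha : forall a, valid s t a -> forall q,
    sw3 t a (fun a1 a2 a3 => lin (S a1) (fun r => mul r a3) q * alpha a2) = alpha a * one q;
  gm_beta : forall a, valid s t a -> forall q,
    sw3 t a (fun a1 a2 a3 => lin (S a3) (fun r => mul a1 r) q * beta a2) = beta a * one q;
  (* (vi) *)
  gm_vi1 : forall a, valid s t a ->
    sw5 t a (fun a1 a2 a3 a4 a5 =>
      lin0 (S a3) (fun r => Phi a1 r a5) * beta a2 * alpha a4) = eps a;
  gm_vi2 : forall a, valid s t a ->
    sw5 t a (fun a1 a2 a3 a4 a5 =>
      lin0 (S a1) (fun r => lin0 (S a5) (fun r' => Phinv r a3 r')) * alpha a2 * beta a4)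
    = eps a;
  gm_mul_deg : forall p q, valid s t p -> valid s t q -> forall r,
    mul p q r != 0 -> plen r = (plen p + plen q)%N;
  gm_one_deg : forall r, one r != 0 -> plen r = 0%N;
  gm_S_deg : forall p, valid s t p -> forall r, S p r != 0 -> plen r = plen p;
  gm_Phi_deg : forall p q r, valid s t p -> valid s t q -> valid s t r ->
    [|| (0 < plen p)%N, (0 < plen q)%N | (0 < plen r)%N] -> Phi p q r = 0;
  gm_alpha_deg : forall p, valid s t p -> (0 < plen p)%N -> alpha p = 0;
  gm_beta_deg : forall p, valid s t p -> (0 < plen p)%N -> beta p = 0
}.

Definition inM {V A : eqType} {k : fieldType} (s t : A -> V) (g h : V)
  (m : qpath V A -> k) : Prop :=
  elt s t m /\ forall p, m p != 0 -> exists a, p = arr s a /\ s a = h /\ t a = g.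

(* f.m = M(f (x) m) and m.f = M(m (x) f) *)
Definition lact {V A : eqType} {k : fieldType}
  (mul : qpath V A -> qpath V A -> qpath V A -> k) (f : V) (m : qpath V A -> k)
  : qpath V A -> k := lin m (fun r => mul (vtx f) r).
Definition ract {V A : eqType} {k : fieldType}
  (mul : qpath V A -> qpath V A -> qpath V A -> k) (f : V) (m : qpath V A -> k)
  : qpath V A -> k := lin m (fun r => mul r (vtx f)).

Definition equinum {A : Type} (P1 P2 : A -> Prop) : Prop :=
  exists (f f' : A -> A),
    (forall a, P1 a -> P2 (f a)) /\ (forall b, P2 b -> P1 (f' b)) /\
    (forall a, P1 a -> f' (f a) = a) /\ (forall b, P2 b -> f (f' b) = b).

From HB Require Import structures.
From mathcomp Require Import all_boot all_algebra.
From mathcomp Require Import boolp classical_sets functions cardinality.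
From Stdlib Require Import ClassicalEpsilon.
Set Implicit Arguments. Unset Strict Implicit. Unset Printing Implicit Defensive.
Import GRing.Theory.
Local Open Scope ring_scope.
Local Open Scope classical_set_scope.
Local Open Scope card_scope.

(* If two sets P, Q of basis indices are related by
      column-finite matrices F (P x Q) and G (Q x P) with F G = c I, c != 0,
      then |P| <= |Q|: for finite Q the rows of F are linearly independent
      (a rank argument); for infinite Q, P embeds into Q x N, which embeds
      into Q by a Zorn's lemma argument.  Cantor-Bernstein (from the library)
      turns two such inequalities into a bijection.
   2. The path coalgebra.  Finitely supported coefficient functions, their
      linear extensions, and two recognition principles: a group-like element
      of degree 0 is a vertex, and a degree-1 element with
      Delta y = g (x) y + y (x) h lies in gM^h.
   3. The Majid structure.  M(g (x) h), 1 and S(g) are group-like, hence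
      vertices; axioms (i), (ii), (v), (vi) give the group laws.  f.m and m.f
      are skew-primitive, giving f.gM^h <= fgM^fh; axiom (i) on two vertices
      and an arrow gives the reassociation identities, where every Phi at an
      arrow vanishes by the grading.  Acting by f^-1 inverts the action of f
      up to a nonzero scalar, so the action is onto and (by layer 1) preserves
      the number of arrows; composing three translations counts the arrows
      x -> g^-1 c g x. *)

Lemma card_le_of_inj (T U : Type) (P : set T) (Q : set U) (f : T -> U) :
  (forall a, P a -> Q (f a)) -> {in P &, injective f} -> P #<= Q.
Proof.
move=> PQ finj; rewrite -(card_le_eql (inj_card_eq finj)).
by apply: subset_card_le => _ [a Pa <-]; apply: PQ.
Qed.

Lemma set_type_val (T : Type) (X : set T) (a : T) : X a -> exists x : X, val x = a.
Proof. by move=> Xa; exists (exist _ a (mem_set Xa)). Qed.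

Definition extend_to (T U : Type) (X : set T) (Y : set U) (h : X -> Y) (d : T -> U) (a : T) : U :=
  if pselect (X a) is left Xa then val (h (exist _ a (mem_set Xa))) else d a.

Lemma extend_toE (T U : Type) (X : set T) (Y : set U) (h : X -> Y) d (x : X) :
  extend_to h d (val x) = val (h x).
Proof.
rewrite /extend_to; case: pselect => [Xa|]; last by case; apply: set_mem (valP x).
by congr (val (h _)); apply: val_inj.
Qed.

Lemma extend_to_in (T U : Type) (X : set T) (Y : set U) (h : X -> Y) d (a : T) :
  X a -> Y (extend_to h d a).
Proof. by move=> Xa; have [x <-] := set_type_val Xa; rewrite extend_toE; apply: set_mem (valP _). Qed.

Lemma inj_of_card_le (T U : Type) (P : set T) (Q : set U) (u0 : U) :
  P #<= Q -> exists2 f : T -> U, (forall a, P a -> Q (f a)) & {in P &, injective f}.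
Proof.
move=> /card_leP[g]; exists (extend_to (g : P -> Q) (fun _ => u0)); first exact: extend_to_in.
move=> a b /set_mem Pa /set_mem Pb; have [x <-] := set_type_val Pa; have [y <-] := set_type_val Pb.
by rewrite !extend_toE => /val_inj/(in2TT 'inj_g) ->.
Qed.

Lemma equinum_of_card_eq (T : Type) (P Q : set T) : P #= Q -> equinum P Q.
Proof.
move=> /card_bijP[f [g fK gK]]; exists (extend_to f id), (extend_to g id).
split; [exact: extend_to_in|split; [exact: extend_to_in|split]].
- by move=> a Pa; have [x <-] := set_type_val Pa; rewrite !extend_toE fK.
- by move=> b Qb; have [y <-] := set_type_val Qb; rewrite !extend_toE gK.
Qed.

(* Absorption: an infinite set Q satisfies |Q x N| <= |Q|.  We use Zorn's
   lemma on partial absorbers: subsets D of Q with an injection D x N -> D. *)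
Section Absorption.
Variables (A : eqType) (Q : set A).

Record absorber := Absorber { adom : set A; aemb : A -> nat -> A }.

Definition absorbs (x : absorber) :=
  [/\ adom x `<=` Q, (forall a n, adom x a -> adom x (aemb x a n))
    & forall a n b m, adom x a -> adom x b -> aemb x a n = aemb x b m -> a = b /\ n = m].

Definition extends (x y : absorber) :=
  adom x `<=` adom y /\ forall a n, adom x a -> aemb x a n = aemb y a n.

Definition maximal (x : absorber) := forall y, absorbs y -> extends x y -> extends y x.

Lemma extends_refl x : extends x x.
Proof. by split. Qed.

Lemma extends_trans x y z : extends x y -> extends y z -> extends x z.
Proof.
move=> [xy exy] [yz eyz]; split => [a /xy /yz //|a n xa].
by rewrite exy // eyz //; apply: xy.
Qed.

Section ChainUnion.
Variable C : set {x | absorbs x}.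
Hypothesis Ctot : total_on C (fun x y => extends (sval x) (sval y)).

Definition union_emb (a : A) (n : nat) : A :=
  if pselect (exists x, C x /\ adom (sval x) a) is left h
  then aemb (sval (projT1 (cid h))) a n else a.

Lemma union_embE x a n : C x -> adom (sval x) a -> union_emb a n = aemb (sval x) a n.
Proof.
move=> Cx xa; rewrite /union_emb; case: pselect => [h|[]]; last by exists x.
case: (cid h) => y [Cy ya] /=.
by case: (Ctot Cy Cx) => [[_ ->]|[_ <-]].
Qed.

Definition union_absorber := Absorber (fun a => exists2 x, C x & adom (sval x) a) union_emb.

Lemma union_absorbs : absorbs union_absorber.
Proof.
split => /=.
- by move=> a [x _ xa]; case: (proj2_sig x) => + _ _; apply.
- move=> a n [x Cx xa]; exists x; rewrite ?(union_embE n Cx xa) //.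
  by case: (proj2_sig x) => _ + _; apply.
- move=> a n b m [x Cx xa] [y Cy yb]; rewrite (union_embE n Cx xa) (union_embE m Cy yb).
  case: (Ctot Cx Cy) => [[xy exy]|[yx eyx]].
  + by rewrite exy //; case: (proj2_sig y) => _ _ yinj; apply: yinj => //; apply: xy.
  + by rewrite eyx //; case: (proj2_sig x) => _ _ xinj; apply: xinj => //; apply: yx.
Qed.

Lemma union_extends x : C x -> extends (sval x) union_absorber.
Proof. by move=> Cx; split=> [a xa|a n xa] /=; [exists x|rewrite (union_embE n Cx xa)]. Qed.
End ChainUnion.

Lemma exists_maximal : exists2 x, absorbs x & maximal x.
Proof.
have empty_absorbs : absorbs (Absorber set0 (fun a _ => a)) by split.
pose R (x y : {x | absorbs x}) := `[< extends (sval x) (sval y) >].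
have [|x y z|C Ctot|[x xabs] xmax] := @ZL_preorder _ (exist _ _ empty_absorbs) R.
- by move=> x; apply/asboolP; apply: extends_refl.
- by move=> /asboolP xy /asboolP yz; apply/asboolP; apply: extends_trans xy yz.
- have Ctot' : total_on C (fun x y => extends (sval x) (sval y)).
    by move=> x y Cx Cy; case: (Ctot x y Cx Cy) => /asboolP; [left|right].
  exists (exist _ _ (union_absorbs Ctot')) => x Cx.
  by apply/asboolP; apply: union_extends.
- by exists x => // y yabs /asboolP /(xmax (exist _ y yabs)) /asboolP.
Qed.

(* A maximal absorber leaves only finitely many points of Q uncovered:
   otherwise an injective sequence outside its domain could enlarge it. *)
Lemma maximal_cofinite x : absorbs x -> maximal x -> finite_set (Q `\` adom x).
Proof.
case=> xQ xcl xinj xmax; apply: contrapT => Rinf.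
have [a0 _] := infinite_setN0 Rinf.
have [e eR einj] := inj_of_card_le a0 (proj1 (infiniteP _) Rinf).
have eD i : ~ adom x (e i) by case: (eR i I).
pose pre a := if pselect (exists i, e i = a) is left h then projT1 (cid h) else 0%N.
have preE i : pre (e i) = i.
  rewrite /pre; case: pselect => [h|[]]; last by exists i.
  by case: (cid h) => j /= eji; apply: einj; rewrite ?in_setE.
pose y := Absorber (fun a => adom x a \/ exists i, e i = a)
  (fun a n => if `[< adom x a >] then aemb x a n else e (pickle (pre a, n))).
have eE i n : (if `[< adom x (e i) >] then aemb x (e i) n else e (pickle (pre (e i), n)))
    = e (pickle (i, n)).
  by case: asboolP => [/eD|_] //; rewrite preE.
have yabs : absorbs y.
  split => /=.
  - by move=> a [/xQ //|[i <-]]; case: (eR i I).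
  - by move=> a n _; case: asboolP => [xa|_]; [left; apply: xcl|right; eexists].
  - move=> a n b m [xa|[i <-]] [xb|[j <-]]; rewrite ?eE ?(asboolT xa) ?(asboolT xb).
    + exact: xinj.
    + by move=> E; case: (eD (pickle (j, m))); rewrite -E; apply: xcl.
    + by move=> E; case: (eD (pickle (i, n))); rewrite E; apply: xcl.
    + by move/(einj _ _ (in_setT _) (in_setT _))/(pcan_inj (@pickleK _)) => [-> ->].
have xy : extends x y by split=> [a xa|a n xa] /=; [left|rewrite asboolT].
have [yx _] := xmax y yabs xy.
by apply: (eD 0); apply: yx; right; exists 0%N.
Qed.

(* A maximal absorber D covers Q up to a finite list F; embed D x N through
   the even values and F x N through the odd values of an injection. *)
Lemma infinite_absorbs_nat : infinite_set Q -> Q `*` [set: nat] #<= Q.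
Proof.
move=> Qinf; have [x xabs xmax] := exists_maximal.
have /finite_seqP[F EF] := maximal_cofinite xabs xmax.
case: xabs => xQ xcl xinj.
have [d0 Dd0] : exists d0, adom x d0.
  apply: contrapT => nD; apply: Qinf; apply: (@sub_finite_set _ _ [set` F]) => // a Qa.
  by rewrite -EF; split => // Da; apply: nD; exists a.
pose h a n := if `[< adom x a >] then aemb x a n.*2 else aemb x d0 (pickle (index a F, n)).*2.+1.
apply: (@card_le_of_inj _ _ _ _ (fun p => h p.1 p.2)).
  by move=> [a n] _; rewrite /h; case: asboolP => Da; apply: xQ; apply: xcl.
move=> [a n] [b m] /set_mem [/= Qa _] /set_mem [/= Qb _]; rewrite /h /=.
have inF c : Q c -> ~ adom x c -> c \in F by move=> Qc Dc; have : [set` F] c by rewrite -EF.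
case: asboolP => Da; case: asboolP => Db /xinj.
- by case/(_ Da Db) => -> /double_inj ->.
- by case/(_ Da Dd0) => _ /(congr1 odd); rewrite /= !odd_double.
- by case/(_ Dd0 Db) => _ /(congr1 odd); rewrite /= !odd_double.
case/(_ Dd0 Dd0) => _ /eq_add_S /double_inj /(pcan_inj (@pickleK _)) [Eab ->].
by rewrite -(nth_index a (inF _ Qa Da)) -(nth_index a (inF _ Qb Db)) Eab.
Qed.
End Absorption.

Lemma sum_neq0 (R : nmodType) (I : eqType) (r : seq I) (F : I -> R) :
  \sum_(i <- r) F i != 0 -> exists2 i, i \in r & F i != 0.
Proof.
move=> nz; apply/hasP; apply: contraNT nz => /hasPn Fr.
by rewrite big_seq big1 // => i /Fr /negPn /eqP.
Qed.

(* F and G are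
   column-finite matrices indexed by P x Q and Q x P (rows of F and of G have
   finite support), F takes values in Q, and F G = c I on P, with c != 0. *)
Section Dimension.
Variables (k : fieldType) (A : eqType) (P Q : set A) (F G : A -> A -> k) (c : k).
Hypothesis c_neq0 : c != 0.
Hypothesis F_fin : forall a, P a -> exists l : seq A, forall b, F a b != 0 -> b \in l.
Hypothesis F_Q : forall a b, P a -> F a b != 0 -> Q b.
Hypothesis G_fin : forall b, Q b -> exists l : seq A, forall a, G b a != 0 -> a \in l.
Hypothesis FG : forall a a', P a -> P a' -> forall l : seq A, uniq l ->
  (forall b, F a b != 0 -> b \in l) -> \sum_(b <- l) F a b * G b a' = c * (a == a')%:R.

(* Finitely many rows of F supported in ys are linearly independent. *)
Lemma dim_le (xs ys : seq A) : uniq xs -> uniq ys -> (forall x, x \in xs -> P x) ->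
  (forall x b, x \in xs -> F x b != 0 -> b \in ys) -> (size xs <= size ys)%N.
Proof.
move=> uxs uys xsP xsF.
case exs: xs => [//|x0 xs']; rewrite -exs.
pose M := \matrix_(i < size xs, j < size ys) F (nth x0 xs i) (nth x0 ys j).
suff : row_free M by rewrite -row_leq_rank => /leq_trans; apply; apply: rank_leq_col.
apply: inj_row_free => v vM0; apply/rowP => i; rewrite mxE.
have comb0 y : \sum_(j < size xs) v 0 j * F (nth x0 xs j) y = 0.
  case: (boolP (y \in ys)) => yys; last first.
    apply: big1 => j _; case: (eqVneq (F (nth x0 xs j) y) 0) => [->|Fy]; first by rewrite mulr0.
    by case/negP: yys; apply: (xsF _ _ (mem_nth _ (ltn_ord j))) Fy.
  have yi : (index y ys < size ys)%N by rewrite index_mem.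
  have := congr1 (fun w : 'rV[k]_(size ys) => w 0 (Ordinal yi)) vM0.
  rewrite !mxE /= => E; rewrite -[RHS]E; apply: eq_bigr => j _; by rewrite mxE /= nth_index.
have vi : v 0 i = \sum_(j < size xs) v 0 j * (nth x0 xs j == nth x0 xs i)%:R.
  rewrite (bigD1 i) //= eqxx mulr1 big1 ?addr0 // => j ji.
  by rewrite nth_uniq // (inj_eq val_inj) (negbTE ji) mulr0.
have : c * v 0 i = 0.
  rewrite vi big_distrr /=.
  transitivity (\sum_(j < size xs) v 0 j * \sum_(b <- ys) F (nth x0 xs j) b * G b (nth x0 xs i)).
    apply: eq_bigr => j _; rewrite FG //; first by rewrite mulrCA.
    - exact: xsP (mem_nth _ (ltn_ord j)).
    - exact: xsP (mem_nth _ (ltn_ord i)).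
    - by move=> b; apply: xsF (mem_nth _ (ltn_ord j)).
  under eq_bigr do rewrite big_distrr /=.
  rewrite exchange_big /= big1 // => b _.
  by under eq_bigr do rewrite mulrA; rewrite -big_distrl /= comb0 mul0r.
by move/eqP; rewrite mulf_eq0 (negbTE c_neq0) => /eqP.
Qed.

(* Finite Q: every duplicate-free list in P is at most as long as Q, so P is
   finite and injects into Q. *)
Lemma card_le_finite_target : finite_set Q -> P #<= Q.
Proof.
move=> /finite_seqP[ys0 EQ]; pose ys := undup ys0.
have Qys b : Q b <-> b \in ys by rewrite EQ mem_undup.
have bound xs : uniq xs -> (forall a, a \in xs -> P a) -> (size xs <= size ys)%N.
  move=> uxs xsP; apply: dim_le => //; first exact: undup_uniq.
  by move=> x b /xsP Px /(F_Q Px) /Qys.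
have [xs [uxs xsP Pxs]] : exists xs,
    [/\ uniq xs, forall a, a \in xs -> P a & forall a, P a -> a \in xs].
  pose lists m := `[< exists xs, [/\ uniq xs, forall a, a \in xs -> P a & size xs = m] >].
  have ex0 : exists m, lists m by exists 0%N; apply/asboolP; exists [::].
  have ub m : lists m -> (m <= size ys)%N by move/asboolP => [xs [uxs xsP <-]]; apply: bound.
  case: (ex_maxnP ex0 ub) => _ /asboolP [xs [uxs xsP <-]] maxm.
  exists xs; split => // a Pa; apply: contrapT => /negP axs.
  suff : ((size xs).+1 <= size xs)%N by rewrite ltnn.
  apply: maxm; apply/asboolP; exists (a :: xs); split => //=; first by rewrite axs.
  by move=> b; rewrite inE => /orP[/eqP -> //|/xsP].
have ix a : P a -> (index a xs < size ys)%N.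
  by move=> Pa; apply: leq_trans (bound _ uxs xsP); rewrite index_mem Pxs.
apply: (@card_le_of_inj _ _ _ _ (fun a => nth a ys (index a xs))).
  by move=> a Pa; apply/Qys; rewrite mem_nth ?ix.
move=> a b /set_mem Pa /set_mem Pb; rewrite (set_nth_default a) ?ix // => /eqP.
rewrite nth_uniq ?ix ?undup_uniq // => /eqP Eab.
by rewrite -(nth_index a (Pxs _ Pa)) Eab nth_index ?Pxs.
Qed.

(* Infinite Q: a in P is determined by some b in Q with G b a != 0 (the
   pivot, which exists as (F G) a a = c) and the position of a in the
   support of G b; so P embeds in Q x N, which embeds in Q. *)
Lemma card_le_infinite_target : infinite_set Q -> P #<= Q.
Proof.
move=> Qinf; apply: card_le_trans (infinite_absorbs_nat Qinf).
pose supp b := if pselect (exists l : seq A, forall a, G b a != 0 -> a \in l) is left h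
  then projT1 (cid h) else [::].
have suppP b a : Q b -> G b a != 0 -> a \in supp b.
  rewrite /supp; case: pselect => [h|nG /G_fin //]; by case: (cid h) => l /= lG _ /lG.
pose pivot a := if pselect (exists b, Q b /\ G b a != 0) is left h then projT1 (cid h) else a.
have pivotP a : P a -> Q (pivot a) /\ G (pivot a) a != 0.
  move=> Pa; rewrite /pivot; case: pselect => [h|[]]; first by case: (cid h).
  have [l lF] := F_fin Pa.
  have : \sum_(b <- undup l) F a b * G b a != 0.
    by rewrite FG ?undup_uniq ?eqxx ?mulr1 // => b /lF; rewrite mem_undup.
  case/sum_neq0 => b _ FGb; exists b; split.
    by apply: (F_Q Pa); apply: contraNneq FGb => ->; rewrite mul0r.
  by apply: contraNneq FGb => ->; rewrite mulr0.
apply: (@card_le_of_inj _ _ _ _ (fun a => (pivot a, index a (supp (pivot a))))).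
  by move=> a Pa; split => //=; case: (pivotP a Pa).
move=> a b /set_mem Pa /set_mem Pb [Eab Eidx].
have [Qa Ga] := pivotP a Pa; have [Qb Gb] := pivotP b Pb.
by rewrite -(nth_index a (suppP _ _ Qa Ga)) Eidx Eab nth_index // suppP.
Qed.

Lemma dim_card_le : P #<= Q.
Proof.
by case: (pselect (finite_set Q)) => [/card_le_finite_target|/card_le_infinite_target].
Qed.
End Dimension.

Section FiniteSupport.
Variables (k : fieldType) (V A : eqType).
Notation qp := (qpath V A).
Implicit Types (x : qp -> k) (p q r : qp).

Definition fin_supp x := exists l : seq qp, forall p, x p != 0 -> p \in l.

Lemma supP x : fin_supp x -> forall p, x p != 0 -> p \in sup x.
Proof.
move=> fx p xp; rewrite /sup mem_undup.
exact: (epsilon_spec (inhabits [::]) (fun l => forall p, x p != 0 -> p \in l) fx).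
Qed.

Lemma lin0E x (g : qp -> k) (l : seq qp) : fin_supp x -> uniq l ->
  (forall p, x p != 0 -> p \in l) -> lin0 x g = \sum_(p <- l) x p * g p.
Proof.
move=> fx ul xl.
have drop0 (l' : seq qp) : \sum_(p <- l') x p * g p = \sum_(p <- l' | x p != 0) x p * g p.
  by rewrite [RHS]big_mkcond; apply: eq_bigr => p _; case: (eqVneq (x p) 0) => [->|]; rewrite ?mul0r.
rewrite /lin0 drop0 [RHS]drop0 -[LHS]big_filter -[RHS]big_filter; apply: perm_big.
apply: uniq_perm; rewrite ?filter_uniq ?undup_uniq // => p.
by rewrite !mem_filter; case: (boolP (x p != 0)) => //= xp; rewrite supP ?xl.
Qed.

Lemma linE (T : Type) x (F : qp -> T -> k) (l : seq qp) (q : T) : fin_supp x -> uniq l ->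
  (forall p, x p != 0 -> p \in l) -> lin x F q = \sum_(p <- l) x p * F p q.
Proof. exact: (lin0E (fun p => F p q)). Qed.

Lemma lin0_ext x (g1 g2 : qp -> k) : (forall p, x p != 0 -> g1 p = g2 p) ->
  lin0 x g1 = lin0 x g2.
Proof. by move=> eg; apply: eq_bigr => p _; case: (eqVneq (x p) 0) => [->|/eg ->]; rewrite ?mul0r. Qed.

Lemma lin0_delta x q : fin_supp x -> lin0 x (fun r => (r == q)%:R) = x q.
Proof.
move=> fx; case: (boolP (q \in sup x)) => qx.
  rewrite /lin0 (bigD1_seq q) ?undup_uniq //= eqxx mulr1 big1 ?addr0 // => p /negbTE ->.
  by rewrite mulr0.
rewrite /lin0 big_seq big1 => [|p px]; last by rewrite (negbTE (memPn qx p px)) mulr0.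
by apply/esym/eqP; apply: contraNT qx; apply: supP.
Qed.

Lemma fin_supp_bas p : fin_supp (bas p : qp -> k).
Proof. by exists [:: p] => q; rewrite /bas inE; case: (q == p); rewrite ?mulr0n ?eqxx. Qed.

Lemma lin0_bas p (g : qp -> k) : lin0 (bas p) g = g p.
Proof.
rewrite (lin0E _ (fin_supp_bas p) (l := [:: p])) // ?big_seq1 /bas ?eqxx ?mul1r //.
by move=> q; rewrite inE /bas; case: (q == p); rewrite ?mulr0n ?eqxx.
Qed.

Lemma lin_bas (T : Type) p (F : qp -> T -> k) (q : T) : lin (bas p) F q = F p q.
Proof. exact: lin0_bas. Qed.

Lemma bas_inj p q : (bas p : qp -> k) =1 bas q -> p = q.
Proof. by move/(_ p); rewrite /bas eqxx; case: eqP => // _ /eqP; rewrite oner_eq0. Qed.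

Lemma lin_nz x (F : qp -> qp -> k) r : lin x F r != 0 -> exists2 p, x p != 0 & F p r != 0.
Proof.
by case/sum_neq0 => p _ xFp; exists p; apply: contraNneq xFp => ->; rewrite ?mul0r ?mulr0.
Qed.

Section Composition.
Variables (x : qp -> k) (F : qp -> qp -> k).
Hypotheses (fx : fin_supp x) (fF : forall p, x p != 0 -> fin_supp (F p)).

Let L := undup (flatten [seq sup (F p) | p <- sup x]).

Let memL p r : x p != 0 -> F p r != 0 -> r \in L.
Proof.
move=> xp Fpr; rewrite mem_undup; apply/flattenP; exists (sup (F p)).
  by apply/mapP; exists p => //; apply: supP.
exact: supP (fF xp) _ Fpr.
Qed.

Let memL_lin r : lin x F r != 0 -> r \in L.
Proof. by case/lin_nz => p; apply: memL. Qed.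

Lemma fin_supp_lin : fin_supp (lin x F).
Proof. by exists L; apply: memL_lin. Qed.

Lemma lin0_lin (g : qp -> k) : lin0 (lin x F) g = lin0 x (fun p => lin0 (F p) g).
Proof.
rewrite (lin0E _ fin_supp_lin (undup_uniq _) memL_lin) /lin /lin0.
under eq_bigr do rewrite big_distrl /=.
rewrite exchange_big /=; apply: eq_bigr => p _.
case: (eqVneq (x p) 0) => [->|xp]; first by rewrite mul0r big1 // => r _; rewrite !mul0r.
rewrite -[RHS]/(x p * lin0 (F p) g) (lin0E _ (fF xp) (undup_uniq _) (fun r => memL (r := r) xp)).
by rewrite big_distrr /=; apply: eq_bigr => r _; rewrite mulrA.
Qed.
End Composition.

Lemma lin0_scale x (g : qp -> k) c : lin0 x (fun p => c * g p) = c * lin0 x g.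
Proof. by rewrite /lin0 big_distrr /=; apply: eq_bigr => p _; rewrite mulrCA. Qed.

Lemma lin0_scaler x (g : qp -> k) c : lin0 x (fun p => g p * c) = lin0 x g * c.
Proof. by rewrite /lin0 big_distrl /=; apply: eq_bigr => p _; rewrite mulrA. Qed.

Lemma lin0D x (g1 g2 : qp -> k) : lin0 x (fun p => g1 p + g2 p) = lin0 x g1 + lin0 x g2.
Proof. by rewrite /lin0 -big_split /=; apply: eq_bigr => p _; rewrite mulrDr. Qed.

Lemma lin_scale (T : Type) x (F : qp -> T -> k) c (q : T) : fin_supp x ->
  lin (fun p => c * x p) F q = c * lin x F q.
Proof.
have cx p : c * x p != 0 -> x p != 0 by apply: contraNneq => ->; rewrite mulr0.
move=> fx; rewrite (linE _ _ (l := sup x)) ?undup_uniq //.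
- by rewrite /lin big_distrr /=; apply: eq_bigr => p _; rewrite mulrA.
- by case: fx => l xl; exists l => p /cx /xl.
- by move=> p /cx /(supP fx).
Qed.
End FiniteSupport.

Section PathCoalgebra.
Variables (k : fieldType) (V A : eqType) (s t : A -> V).
Notation qp := (qpath V A).
Implicit Types (x y m : qp -> k) (p q r u v : qp).

Lemma valid_arr a : valid s t (arr s a : qp).
Proof. by rewrite /valid /= eqxx. Qed.

Lemma vtx_inj : injective (@vtx V A).
Proof. by move=> g h []. Qed.

Lemma arr_inj : injective (@arr V A s).
Proof. by move=> a b []. Qed.

Lemma arr_vtxF a g : (arr s a == vtx g :> qp) = false.
Proof. by apply/eqP; case. Qed.

Lemma vtx_arrF a g : (vtx g == arr s a :> qp) = false.
Proof. by apply/eqP; case. Qed.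

Lemma sw2_vtx g (F : qp -> qp -> k) : sw2 t (vtx g) F = F (vtx g) (vtx g).
Proof. by rewrite /sw2 big_seq1. Qed.

Lemma sw2_arr a (F : qp -> qp -> k) :
  sw2 t (arr s a) F = F (vtx (t a)) (arr s a) + F (arr s a) (vtx (s a)).
Proof. by rewrite /sw2 big_cons big_seq1. Qed.

Lemma sw3_vtx g (F : qp -> qp -> qp -> k) : sw3 t (vtx g) F = F (vtx g) (vtx g) (vtx g).
Proof. by rewrite /sw3 !big_seq1. Qed.

Lemma sw5_vtx g (F : qp -> qp -> qp -> qp -> qp -> k) :
  sw5 t (vtx g) F = F (vtx g) (vtx g) (vtx g) (vtx g) (vtx g).
Proof. by rewrite /sw5 !big_seq1. Qed.

Lemma count_splits_arr a u v :
  (count_mem (u, v) (splits t (arr s a)))%:R =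
  (((vtx (t a), arr s a) == (u, v)) + ((arr s a, vtx (s a)) == (u, v)) : nat)%:R :> k.
Proof. by rewrite /= addn0. Qed.

Lemma cop_lin0 x u v : cop t x (u, v) = lin0 x (fun r => (count_mem (u, v) (splits t r))%:R).
Proof. by []. Qed.

Lemma inM_supp g h m p : inM s t g h m -> m p != 0 -> exists a, p = arr s a /\ s a = h /\ t a = g.
Proof. by case=> _; apply. Qed.

Lemma inM_elt g h m : inM s t g h m -> elt s t m.
Proof. by case. Qed.

Lemma plen0 p : plen p = 0%N -> p = vtx p.1.
Proof. by case: p => g []. Qed.

Lemma plen1 p : valid s t p -> plen p = 1%N -> exists a, p = arr s a.
Proof.
case: p => g [|a [|b l]] // /andP[/eqP sa _] _.
by exists a; rewrite /arr sa.
Qed.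

Lemma elt_fin_supp x : elt s t x -> fin_supp x.
Proof. by case. Qed.

(* A group-like element of degree 0 (Delta x = x (x) x, eps x = 1) is a
   vertex: in degree 0, Delta x = sum_g x(g) g (x) g, so the coefficients are
   orthogonal idempotents summing to 1; exactly one of them is nonzero. *)
Lemma grouplike_vtx x : elt s t x -> (forall r, x r != 0 -> plen r = 0%N) ->
  lin0 x eps = 1 -> (forall u v, cop t x (u, v) = x u * x v) ->
  exists g, x =1 bas (vtx g).
Proof.
move=> ex deg x_eps x_cop; have fx := elt_fin_supp ex.
have xvtx r : x r != 0 -> r = vtx r.1 by move/deg/plen0.
have copE u v : cop t x (u, v) = lin0 x (fun r => ((r, r) == (u, v))%:R).
  by apply: lin0_ext => r /xvtx ->; rewrite /= addn0.
have x_idem u : x u * x u = x u.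
  rewrite -x_cop copE -(lin0_delta u fx); apply: lin0_ext => r _.
  by rewrite xpair_eqE andbb.
have x_orth u v : u != v -> x u * x v = 0.
  move=> uv; rewrite -x_cop copE /lin0 big1 // => r _; rewrite xpair_eqE.
  by case: (eqVneq r u) => [->|]; rewrite ?(negbTE uv) mulr0.
have sum1 : \sum_(r <- sup x) x r = 1.
  rewrite -x_eps; apply: eq_bigr => r _.
  by case: (eqVneq (x r) 0) => [->|/xvtx ->]; rewrite ?mul0r // /eps /= mulr1.
have [r0 _ xr0] : exists2 r0, r0 \in sup x & x r0 != 0.
  by apply: sum_neq0; rewrite sum1 oner_eq0.
have xr0_1 : x r0 = 1 by apply: (mulfI xr0); rewrite x_idem mulr1.
exists r0.1 => q; rewrite -(xvtx _ xr0) /bas.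
case: (eqVneq q r0) => [->|qr0] /=; first by rewrite xr0_1.
by rewrite -[x q]mul1r -xr0_1 x_orth // eq_sym.
Qed.

(* An element of degree 1 with Delta y = g (x) y + y (x) h lies in gM^h:
   comparing the coefficients of t(a) (x) a and a (x) s(a) for an arrow a in
   the support forces t(a) = g and s(a) = h. *)
Lemma skew_primitive_inM y g h : elt s t y -> (forall r, y r != 0 -> plen r = 1%N) ->
  (forall u v, cop t y (u, v) = bas (vtx g) u * y v + y u * bas (vtx h) v) -> inM s t g h y.
Proof.
move=> ey deg y_cop; split => // p yp.
have [a ea] := plen1 (proj2 ey p yp) (deg p yp); subst p; exists a; split => //.
have yarr r : y r != 0 -> exists b, r = arr s b by move=> yr; apply: plen1 (proj2 ey r yr) (deg r yr).
have [cop_t cop_s] : cop t y (vtx (t a), arr s a) = y (arr s a) /\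
                     cop t y (arr s a, vtx (s a)) = y (arr s a).
  split; rewrite -(lin0_delta _ (elt_fin_supp ey)); apply: lin0_ext => _ /yarr [b ->];
    rewrite count_splits_arr !xpair_eqE ?arr_vtxF ?vtx_arrF ?andbF ?andFb;
    (case: (eqVneq b a) => [->|ba]; first by rewrite !eqxx);
    by rewrite !eqseq_cons (negbTE ba) !andbF.
have cancel_y (c : k) : y (arr s a) * c = y (arr s a) -> c = 1.
  by move=> E; apply: (mulfI yp) => /=; rewrite E mulr1.
have bool1 (b : bool) : b%:R = 1 :> k -> b by case: b => // /esym/eqP; rewrite oner_eq0.
move: cop_t cop_s; rewrite !y_cop /bas !arr_vtxF mul0r mulr0 add0r addr0 [_ * y _]mulrC.
by move=> /cancel_y /bool1 /eqP [->] /cancel_y /bool1 /eqP [->].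
Qed.
End PathCoalgebra.

Section ArrowCounting.
Variables (k : fieldType) (V A : eqType) (s t : A -> V).
Notation qp := (qpath V A).
Implicit Types (m : qp -> k) (g h : V).

Definition arrows g h : set A := fun a => s a = h /\ t a = g.

Definition linear_on_kQ (L : (qp -> k) -> qp -> k) :=
  forall y, elt s t y -> forall q, L y q = lin0 y (fun r => L (bas r) q).

Lemma inM_scale g h m c : inM s t g h m -> inM s t g h (fun q => c * m q).
Proof.
have cm q : c * m q != 0 -> m q != 0 by apply: contraNneq => ->; rewrite mulr0.
case=> [[[l ml] vm] mM]; split; first split.
- by exists l => p /cm /ml.
- by move=> p /cm /vm.
- by move=> p /cm /mM.
Qed.

Lemma bas_arr_inM a : inM s t (t a) (s a) (bas (arr s a) : qp -> k).
Proof.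
have E r : (bas (arr s a) r : k) != 0 -> r = arr s a.
  by rewrite /bas; case: (eqVneq r (arr s a)) => // _; rewrite ?mulr0n eqxx.
split; first split; first exact: fin_supp_bas.
- by move=> r /E ->; apply: valid_arr.
- by move=> r /E ->; exists a.
Qed.

Lemma bas_arr a b : (bas (arr s a) (arr s b) : k) = (a == b)%:R.
Proof. by rewrite /bas; congr (nat_of_bool _)%:R; apply/eqP/eqP => [/arr_inj|->]. Qed.

Lemma inM_arrows g h m b : inM s t g h m -> m (arr s b) != 0 -> arrows g h b.
Proof. by move=> mM /(inM_supp mM) [a [/arr_inj ->]]. Qed.

Lemma inM_arr_supp g h m : inM s t g h m ->
  exists l : seq A, forall b, m (arr s b) != 0 -> b \in l.
Proof.
case=> [[[l ml] _] _]; exists (flatten [seq p.2 | p <- l]) => b /ml bl.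
by apply/flattenP; exists [:: b]; [apply/mapP; exists (arr s b)|rewrite inE].
Qed.

Lemma linear_on_arrows L g h m (l : seq A) q : linear_on_kQ L -> inM s t g h m ->
  uniq l -> (forall b, m (arr s b) != 0 -> b \in l) ->
  L m q = \sum_(b <- l) m (arr s b) * L (bas (arr s b)) q.
Proof.
move=> linL mM ul ml; rewrite (linL _ (inM_elt mM)) (lin0E _ _ (l := [seq arr s b | b <- l])).
- by rewrite big_map.
- exact: elt_fin_supp (inM_elt mM).
- by rewrite map_inj_uniq //; apply: arr_inj.
- by move=> r mr; have [b [er _]] := inM_supp mM mr; subst r; apply: map_f; apply: ml.
Qed.

Lemma card_le_arrows (L L' : (qp -> k) -> qp -> k) g h g' h' (c : k) : c != 0 ->
  (forall m, inM s t g h m -> inM s t g' h' (L m)) ->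
  (forall m, inM s t g' h' m -> inM s t g h (L' m)) ->
  (forall m, inM s t g h m -> forall q, L' (L m) q = c * m q) ->
  linear_on_kQ L' -> arrows g h #<= arrows g' h'.
Proof.
move=> c0 LM L'M L'L linL'.
have basM g1 h1 a : arrows g1 h1 a -> inM s t g1 h1 (bas (arr s a) : qp -> k).
  by case=> <- <-; apply: bas_arr_inM.
apply: (@dim_card_le _ _ _ _ (fun a b => L (bas (arr s a)) (arr s b))
                             (fun b a => L' (bas (arr s b)) (arr s a)) _ c0).
- by move=> a /basM /LM /inM_arr_supp.
- by move=> a b /basM /LM /inM_arrows; apply.
- by move=> b /basM /L'M /inM_arr_supp.
- move=> a a' Pa Pa' l ul lF.
  rewrite -(linear_on_arrows _ linL' (LM _ (basM _ _ _ Pa)) ul lF) L'L; last exact: basM.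
  by congr (_ * _); apply: bas_arr.
Qed.
End ArrowCounting.

Section GradedMajid.
Variables (k : fieldType) (V A : eqType) (s t : A -> V)
  (mul : qpath V A -> qpath V A -> qpath V A -> k) (one : qpath V A -> k)
  (Phi Phinv : qpath V A -> qpath V A -> qpath V A -> k)
  (S : qpath V A -> qpath V A -> k) (alpha beta : qpath V A -> k).
Hypothesis H : graded_majid s t mul one Phi Phinv S alpha beta.
Notation qp := (qpath V A).

Lemma valid_vtx g : valid s t (vtx g : qp). Proof. by []. Qed.

Lemma eps_vtx g : eps (vtx g : qp) = 1 :> k. Proof. by []. Qed.

(* M(g (x) h), 1_H and S(g) are group-like of degree 0, hence vertices. *)
Lemma mul_vtx g h : exists w, mul (vtx g) (vtx h) =1 bas (vtx w).
Proof.
apply: grouplike_vtx.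
- exact: gm_mul_elt H _ _ (valid_vtx g) (valid_vtx h).
- by move=> r /(gm_mul_deg H (valid_vtx g) (valid_vtx h)).
- by rewrite (gm_mul_eps H (valid_vtx g) (valid_vtx h)) !eps_vtx mulr1.
- by move=> u v; rewrite (gm_mul_cop H (valid_vtx g) (valid_vtx h)) !sw2_vtx.
Qed.

Lemma one_vtx : exists u, one =1 bas (vtx u).
Proof.
apply: grouplike_vtx; [exact: gm_one_elt H|exact: gm_one_deg H|exact: gm_one_eps H|].
exact: gm_one_cop H.
Qed.

Lemma S_vtx g : exists w, S (vtx g) =1 bas (vtx w).
Proof.
apply: grouplike_vtx.
- exact: gm_S_elt H _ (valid_vtx g).
- by move=> r /(gm_S_deg H (valid_vtx g)).
- by rewrite (gm_S_eps H (valid_vtx g)).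
- by move=> u v; rewrite (gm_S_cop H (valid_vtx g)) !sw2_vtx.
Qed.

Definition vmul (g h : V) : V := projT1 (cid (mul_vtx g h)).
Definition vone : V := projT1 (cid one_vtx).
Definition vinv (g : V) : V := projT1 (cid (S_vtx g)).

Lemma vmulP g h : mul (vtx g) (vtx h) =1 bas (vtx (vmul g h)).
Proof. exact: projT2 (cid (mul_vtx g h)). Qed.
Lemma voneP : one =1 bas (vtx vone).
Proof. exact: projT2 (cid one_vtx). Qed.
Lemma vinvP g : S (vtx g) =1 bas (vtx (vinv g)).
Proof. exact: projT2 (cid (S_vtx g)). Qed.

Lemma vmulE g h : mul (vtx g) (vtx h) = bas (vtx (vmul g h)).
Proof. exact/funext/vmulP. Qed.
Lemma voneE : one = bas (vtx vone).
Proof. exact/funext/voneP. Qed.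
Lemma vinvE g : S (vtx g) = bas (vtx (vinv g)).
Proof. exact/funext/vinvP. Qed.

(* Phi is convolution invertible, so it does not vanish on vertices. *)
Lemma Phi_vtx_neq0 e f g : Phi (vtx e) (vtx f) (vtx g) != 0.
Proof.
have := gm_Phi_inv_r H (valid_vtx e) (valid_vtx f) (valid_vtx g).
rewrite !sw2_vtx !eps_vtx !mulr1; apply: contra_eqN => /eqP ->.
by rewrite mul0r eq_sym oner_eq0.
Qed.

(* By axiom (vi) on a vertex, alpha(g) beta(g) Phi(...) = 1. *)
Lemma alpha_beta_vtx_neq0 g : alpha (vtx g) != 0 /\ beta (vtx g) != 0.
Proof.
have := gm_vi1 H (valid_vtx g); rewrite sw5_vtx eps_vtx => E.
by split; apply: contra_eqN E => /eqP ->; rewrite ?mulr0 ?mul0r eq_sym oner_eq0.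
Qed.

Lemma vtx_scaled_eq (c : k) g h : c != 0 ->
  (forall r : qp, bas (vtx g) r * c = c * bas (vtx h) r) -> g = h.
Proof.
move=> c0 E; apply: (@vtx_inj V A); apply: (bas_inj (k := k)) => r.
by apply: (mulIf c0) => /=; rewrite E mulrC.
Qed.

(* Group laws: axiom (i) on three vertices (with the nonzero scalar
   Phi(e, f, g) on both sides), axiom (ii), and axiom (v). *)
Lemma vmulA e f g : vmul (vmul e f) g = vmul e (vmul f g).
Proof.
symmetry; apply: (vtx_scaled_eq (Phi_vtx_neq0 e f g)) => q.
have := gm_assoc H (valid_vtx e) (valid_vtx f) (valid_vtx g) q.
by rewrite !sw2_vtx !vmulE !lin_bas !vmulE.
Qed.

Lemma vmul1g g : vmul vone g = g.
Proof.
apply: (@vtx_inj V A); apply: (bas_inj (k := k)) => q.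
by have := gm_unitl H (valid_vtx g) q; rewrite voneE lin_bas vmulE.
Qed.

Lemma vmulg1 g : vmul g vone = g.
Proof.
apply: (@vtx_inj V A); apply: (bas_inj (k := k)) => q.
by have := gm_unitr H (valid_vtx g) q; rewrite voneE lin_bas vmulE.
Qed.

Lemma vmulVg g : vmul (vinv g) g = vone.
Proof.
apply: (vtx_scaled_eq (proj1 (alpha_beta_vtx_neq0 g))) => q.
by have := gm_alpha H (valid_vtx g) q; rewrite sw3_vtx vinvE lin_bas vmulE voneE.
Qed.

Lemma vmulgV g : vmul g (vinv g) = vone.
Proof.
apply: (vtx_scaled_eq (proj2 (alpha_beta_vtx_neq0 g))) => q.
by have := gm_beta H (valid_vtx g) q; rewrite sw3_vtx vinvE lin_bas vmulE voneE.
Qed.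

Lemma Phi_arr_l a g h : Phi (arr s a) (vtx g) (vtx h) = 0.
Proof. exact: (gm_Phi_deg H (valid_arr _ _ _) (valid_vtx _) (valid_vtx _)). Qed.
Lemma Phi_arr_m a g h : Phi (vtx g) (arr s a) (vtx h) = 0.
Proof. by apply: (gm_Phi_deg H (valid_vtx _) (valid_arr _ _ _) (valid_vtx _)); rewrite orbT. Qed.
Lemma Phi_arr_r a g h : Phi (vtx g) (vtx h) (arr s a) = 0.
Proof. by apply: (gm_Phi_deg H (valid_vtx _) (valid_vtx _) (valid_arr _ _ _)); rewrite !orbT. Qed.

Lemma mul_fin_supp p q : valid s t p -> valid s t q -> fin_supp (mul p q).
Proof. by move=> vp vq; apply/elt_fin_supp/(gm_mul_elt H). Qed.

Lemma lact_fin_supp f m : elt s t m -> fin_supp (lact mul f m).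
Proof. by case=> fm vm; apply: fin_supp_lin fm _ => p /vm; apply: mul_fin_supp. Qed.

Lemma ract_fin_supp f m : elt s t m -> fin_supp (ract mul f m).
Proof. by case=> fm vm; apply: fin_supp_lin fm _ => p /vm vp; apply: mul_fin_supp. Qed.

Lemma lin0_lact f m (G : qp -> k) : elt s t m ->
  lin0 (lact mul f m) G = lin0 m (fun p => lin0 (mul (vtx f) p) G).
Proof. by case=> fm vm; rewrite /lact lin0_lin // => p /vm; apply: mul_fin_supp. Qed.

Lemma lin0_ract f m (G : qp -> k) : elt s t m ->
  lin0 (ract mul f m) G = lin0 m (fun p => lin0 (mul p (vtx f)) G).
Proof. by case=> fm vm; rewrite /ract lin0_lin // => p /vm vp; apply: mul_fin_supp. Qed.

Lemma lact_inM f g h m : inM s t g h m -> inM s t (vmul f g) (vmul f h) (lact mul f m).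
Proof.
move=> mM; have em := inM_elt mM; apply: skew_primitive_inM.
- split; first exact: lact_fin_supp.
  by move=> r /lin_nz [p /(proj2 em) vp]; apply: (proj2 (gm_mul_elt H (valid_vtx f) vp)).
- move=> r /lin_nz [p mp fpr]; have [a [ea _]] := inM_supp mM mp; subst p.
  by rewrite (gm_mul_deg H (valid_vtx f) (valid_arr _ _ a) fpr).
- move=> u v; rewrite cop_lin0 lin0_lact // -lin0_scale -lin0_scaler -lin0D.
  apply: lin0_ext => p mp; have [a [ea [sa ta]]] := inM_supp mM mp; subst p.
  by rewrite -cop_lin0 (gm_mul_cop H (valid_vtx f) (valid_arr _ _ a)) sw2_vtx sw2_arr !vmulE sa ta.
Qed.

Lemma ract_inM f g h m : inM s t g h m -> inM s t (vmul g f) (vmul h f) (ract mul f m).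
Proof.
move=> mM; have em := inM_elt mM; apply: skew_primitive_inM.
- split; first exact: ract_fin_supp.
  by move=> r /lin_nz [p /(proj2 em) vp]; apply: (proj2 (gm_mul_elt H vp (valid_vtx f))).
- move=> r /lin_nz [p mp fpr]; have [a [ea _]] := inM_supp mM mp; subst p.
  by rewrite (gm_mul_deg H (valid_arr _ _ a) (valid_vtx f) fpr) addn0.
- move=> u v; rewrite cop_lin0 lin0_ract // -lin0_scale -lin0_scaler -lin0D.
  apply: lin0_ext => p mp; have [a [ea [sa ta]]] := inM_supp mM mp; subst p.
  by rewrite -cop_lin0 (gm_mul_cop H (valid_arr _ _ a) (valid_vtx f)) sw2_arr !sw2_vtx !vmulE sa ta.
Qed.

Lemma lact_one m : elt s t m -> forall q, lact mul vone m q = m q.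
Proof.
move=> [fm vm] q; rewrite -(lin0_delta q fm); apply: lin0_ext => p /vm vp.
by have := gm_unitl H vp q; rewrite voneE lin_bas /bas eq_sym.
Qed.

Lemma ract_one m : elt s t m -> forall q, ract mul vone m q = m q.
Proof.
move=> [fm vm] q; rewrite -(lin0_delta q fm); apply: lin0_ext => p /vm vp.
by have := gm_unitr H vp q; rewrite voneE lin_bas /bas eq_sym.
Qed.

(* The quasi-bimodule identities: axiom (i) evaluated on two vertices and an
   arrow, where all terms with Phi at an arrow vanish. *)
Lemma lact_lact e f g h m : inM s t g h m -> forall q,
  lact mul e (lact mul f m) q =
  Phi (vtx e) (vtx f) (vtx g) / Phi (vtx e) (vtx f) (vtx h) * lact mul (vmul e f) m q.
Proof.
move=> mM q; have em := inM_elt mM; rewrite [LHS]lin0_lact // -lin0_scale; apply: lin0_ext => p mp.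
have [a [ea [sa ta]]] := inM_supp mM mp; subst p.
have := gm_assoc H (valid_vtx e) (valid_vtx f) (valid_arr _ _ a) q.
rewrite !sw2_vtx !sw2_arr !Phi_arr_r !(mulr0, mul0r, addr0, add0r) vmulE lin_bas /= sa ta => E.
by apply: (mulIf (Phi_vtx_neq0 e f h)); rewrite [RHS]mulrAC divfK ?Phi_vtx_neq0.
Qed.

Lemma ract_ract e f g h m : inM s t g h m -> forall q,
  ract mul f (ract mul e m) q =
  Phi (vtx h) (vtx e) (vtx f) / Phi (vtx g) (vtx e) (vtx f) * ract mul (vmul e f) m q.
Proof.
move=> mM q; have em := inM_elt mM; rewrite [LHS]lin0_ract // -lin0_scale; apply: lin0_ext => p mp.
have [a [ea [sa ta]]] := inM_supp mM mp; subst p.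
have := gm_assoc H (valid_arr _ _ a) (valid_vtx e) (valid_vtx f) q.
rewrite !sw2_arr !sw2_vtx !Phi_arr_l !(mulr0, mul0r, addr0, add0r) vmulE lin_bas /= sa ta => E.
apply: (mulIf (Phi_vtx_neq0 g e f)); rewrite [RHS]mulrAC divfK ?Phi_vtx_neq0 //.
by rewrite [LHS]mulrC [RHS]mulrC.
Qed.

Lemma ract_lact e f g h m : inM s t g h m -> forall q,
  ract mul f (lact mul e m) q =
  Phi (vtx e) (vtx h) (vtx f) / Phi (vtx e) (vtx g) (vtx f) * lact mul e (ract mul f m) q.
Proof.
move=> mM q; have em := inM_elt mM.
rewrite [LHS]lin0_lact // [lact _ _ _ q]lin0_ract // -lin0_scale; apply: lin0_ext => p mp.
have [a [ea [sa ta]]] := inM_supp mM mp; subst p.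
have := gm_assoc H (valid_vtx e) (valid_arr _ _ a) (valid_vtx f) q.
rewrite !sw2_vtx !sw2_arr !sw2_vtx !Phi_arr_m !(mulr0, mul0r, addr0, add0r) sa ta => E.
apply: (mulIf (Phi_vtx_neq0 e g f)); rewrite [RHS]mulrAC divfK ?Phi_vtx_neq0 //.
by rewrite [LHS]mulrC [RHS]mulrC.
Qed.

Lemma Phi_ratio_neq0 a b c d e f :
  Phi (vtx a) (vtx b) (vtx c) / Phi (vtx d) (vtx e) (vtx f) != 0.
Proof. by rewrite mulf_neq0 ?invr_eq0 ?Phi_vtx_neq0. Qed.

(* Acting by f^-1 inverts the action of f up to a nonzero scalar, hence the
   actions are onto. *)
Lemma lact_surj f g h m' : inM s t (vmul f g) (vmul f h) m' ->
  exists m, inM s t g h m /\ lact mul f m =1 m'.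
Proof.
move=> mM'; set c := Phi (vtx f) (vtx (vinv f)) (vtx (vmul f g)) /
                     Phi (vtx f) (vtx (vinv f)) (vtx (vmul f h)).
have mM := lact_inM (vinv f) mM'; rewrite -!vmulA !vmulVg !vmul1g in mM.
exists (fun q => c^-1 * lact mul (vinv f) m' q); split; first exact: inM_scale.
move=> q; rewrite /lact lin_scale; last exact: elt_fin_supp (inM_elt mM).
rewrite -/(lact mul f (lact mul (vinv f) m') q) (lact_lact f (vinv f) mM') -/c vmulgV.
by rewrite (lact_one (inM_elt mM')) mulKf ?Phi_ratio_neq0.
Qed.

Lemma ract_surj f g h m' : inM s t (vmul g f) (vmul h f) m' ->
  exists m, inM s t g h m /\ ract mul f m =1 m'.
Proof.
move=> mM'; set c := Phi (vtx (vmul h f)) (vtx (vinv f)) (vtx f) /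
                     Phi (vtx (vmul g f)) (vtx (vinv f)) (vtx f).
have mM := ract_inM (vinv f) mM'; rewrite !vmulA !vmulgV !vmulg1 in mM.
exists (fun q => c^-1 * ract mul (vinv f) m' q); split; first exact: inM_scale.
move=> q; rewrite /ract lin_scale; last exact: elt_fin_supp (inM_elt mM).
rewrite -/(ract mul f (ract mul (vinv f) m') q) (ract_ract (vinv f) f mM') -/c vmulVg.
by rewrite (ract_one (inM_elt mM')) mulKf ?Phi_ratio_neq0.
Qed.

Lemma lact_linear f : linear_on_kQ s t (lact mul f).
Proof. by move=> y _ q; apply: lin0_ext => r _; rewrite /lact lin_bas. Qed.

Lemma ract_linear f : linear_on_kQ s t (ract mul f).
Proof. by move=> y _ q; apply: lin0_ext => r _; rewrite /ract lin_bas. Qed.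

Lemma card_le_lact f g h : arrows s t g h #<= arrows s t (vmul f g) (vmul f h).
Proof.
apply: (card_le_arrows (L := lact mul f) (L' := lact mul (vinv f)) (Phi_ratio_neq0 (vinv f) f g (vinv f) f h)).
- by move=> m; apply: lact_inM.
- by move=> m /(lact_inM (vinv f)); rewrite -!vmulA vmulVg !vmul1g.
- by move=> m mM q; rewrite (lact_lact (vinv f) f mM) vmulVg (lact_one (inM_elt mM)).
- exact: lact_linear.
Qed.

Lemma card_le_ract f g h : arrows s t g h #<= arrows s t (vmul g f) (vmul h f).
Proof.
apply: (card_le_arrows (L := ract mul f) (L' := ract mul (vinv f)) (Phi_ratio_neq0 h f (vinv f) g f (vinv f))).
- by move=> m; apply: ract_inM.
- by move=> m /(ract_inM (vinv f)); rewrite !vmulA vmulgV !vmulg1.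
- by move=> m mM q; rewrite (ract_ract f (vinv f) mM) vmulgV (ract_one (inM_elt mM)).
- exact: ract_linear.
Qed.

Lemma card_eq_lact f g h : arrows s t g h #= arrows s t (vmul f g) (vmul f h).
Proof.
apply: Cantor_Bernstein; first exact: card_le_lact.
by have := card_le_lact (vinv f) (vmul f g) (vmul f h); rewrite -!vmulA vmulVg !vmul1g.
Qed.

Lemma card_eq_ract f g h : arrows s t g h #= arrows s t (vmul g f) (vmul h f).
Proof.
apply: Cantor_Bernstein; first exact: card_le_ract.
by have := card_le_ract (vinv f) (vmul g f) (vmul h f); rewrite !vmulA vmulgV !vmulg1.
Qed.

Lemma card_eq_conj_arrows x g c :
  arrows s t (vmul (vmul (vmul (vinv g) c) g) x) x #= arrows s t c vone.
Proof.
set y := vmul (vmul (vinv g) c) g.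
have E1 := card_eq_ract (vinv x) (vmul y x) x.
rewrite vmulgV vmulA vmulgV vmulg1 in E1.
have E2 := card_eq_lact g y vone.
rewrite vmulg1 /y -!vmulA vmulgV vmul1g in E2.
have E3 := card_eq_ract (vinv g) (vmul c g) g.
rewrite vmulgV vmulA vmulgV vmulg1 in E3.
exact: card_eq_trans (card_eq_trans E1 E2) E3.
Qed.
End GradedMajid.

Theorem mainTheorem2 (k : fieldType) (V A : eqType) (s t : A -> V)
  (mul : qpath V A -> qpath V A -> qpath V A -> k) (one : qpath V A -> k)
  (Phi Phinv : qpath V A -> qpath V A -> qpath V A -> k)
  (S : qpath V A -> qpath V A -> k) (alpha beta : qpath V A -> k) :
  graded_majid s t mul one Phi Phinv S alpha beta ->
  exists (op : V -> V -> V) (u : V) (inv : V -> V),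
    (* M(Q0 (x) Q0) in Q0, 1 is a vertex, S(g) is a vertex *)
    (forall g h, mul (vtx g) (vtx h) =1 bas (vtx (op g h))) /\
    one =1 bas (vtx u) /\
    (forall g, S (vtx g) =1 bas (vtx (inv g))) /\
    (* (Q0, op) is a group with identity 1 and inverse S *)
    (forall x y z, op (op x y) z = op x (op y z)) /\
    (forall x, op u x = x /\ op x u = x) /\
    (forall x, op (inv x) x = u /\ op x (inv x) = u) /\
    (* f . gM^h = fgM^fh  and  gM^h . f = gfM^hf *)
    (forall f g h m, inM s t g h m -> inM s t (op f g) (op f h) (lact mul f m)) /\
    (forall f g h m', inM s t (op f g) (op f h) m' ->
       exists m, inM s t g h m /\ lact mul f m =1 m') /\
    (forall f g h m, inM s t g h m -> inM s t (op g f) (op h f) (ract mul f m)) /\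
    (forall f g h m', inM s t (op g f) (op h f) m' ->
       exists m, inM s t g h m /\ ract mul f m =1 m') /\
    (* quasi-bimodule identities *)
    (forall e f g h m, inM s t g h m -> forall q,
       lact mul e (lact mul f m) q =
       Phi (vtx e) (vtx f) (vtx g) / Phi (vtx e) (vtx f) (vtx h) * lact mul (op e f) m q) /\
    (forall e f g h m, inM s t g h m -> forall q,
       ract mul f (ract mul e m) q =
       Phi (vtx h) (vtx e) (vtx f) / Phi (vtx g) (vtx e) (vtx f) * ract mul (op e f) m q) /\
    (forall e f g h m, inM s t g h m -> forall q,
       ract mul f (lact mul e m) q =
       Phi (vtx e) (vtx h) (vtx f) / Phi (vtx e) (vtx g) (vtx f) * lact mul e (ract mul f m) q) /\
    (* #arrows x -> g^-1 c g x  =  #arrows 1 -> c *)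
    (forall x g c,
       equinum (fun a => s a = x /\ t a = op (op (op (inv g) c) g) x)
               (fun a => s a = u /\ t a = c)).
Proof.
move=> H; exists (vmul H), (vone H), (vinv H).
split; first exact: vmulP.
split; first exact: voneP.
split; first exact: vinvP.
split; first exact: vmulA.
split; first by move=> g; split; [exact: vmul1g|exact: vmulg1].
split; first by move=> g; split; [exact: vmulVg|exact: vmulgV].
split; first by move=> f g h m; apply: lact_inM.
split; first by move=> f g h m'; apply: lact_surj.
split; first by move=> f g h m; apply: ract_inM.
split; first by move=> f g h m'; apply: ract_surj.
split; first exact: (lact_lact H).
split; first exact: (ract_ract H).
split; first exact: (ract_lact H).
by move=> x g c; apply: equinum_of_card_eq; exact: (card_eq_conj_arrows H x g c).
Qed.
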